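(* For every base $b\ge 2$ there exist infinitely many positive integers that are not $b$-wMRH numbers.
   Context: Fix a base $b\ge 2$. $s_b(N)$ is the sum of the base-$b$ digits of $N$. For a positive integer $X$, its reversal $X^R$ is the integer whose base-$b$ representation is that of $X$ written in reverse order (leading zeros of the result are dropped). A positive integer $N$ is a $b$-wMRH number if there exists an integer $A\ge 0$ such that $N=(A+s_b(N))\cdot(A+s_b(N))^R$. *)

From mathcomp Require Import all_boot.
Set Implicit Arguments. Unset Strict Implicit. Unset Printing Implicit Defensive.

(* Base-b digits of n, least significant first; fuel k >= n suffices since
   n strictly decreases when b >= 2. digits b 0 = [::]. *)
Fixpoint digits_aux (b k n : nat) : seq nat :=
  match k with
  | 0 => [::]
  | k'.+1 => if n == 0 then [::] else (n %% b) :: digits_aux b k' (n %/ b)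
  end.

Definition digits (b n : nat) : seq nat := digits_aux b n n.

Definition from_digits (b : nat) (s : seq nat) : nat :=
  foldr (fun d acc => d + b * acc) 0 s.

Definition digit_sum (b n : nat) : nat := sumn (digits b n).

(* X^R: reverse the base-b representation (leading zeros of the result
   disappear automatically when evaluating). *)
Definition reversal (b n : nat) : nat := from_digits b (rev (digits b n)).

Definition wMRH (b N : nat) : Prop :=
  0 < N /\ exists A : nat,
    N = (A + digit_sum b N) * reversal b (A + digit_sum b N).

From mathcomp Require Import all_boot.
From mathcomp Require Import zify.

(* Every prime p > b fails to be a b-wMRH number; since there are primes
   above any bound, this gives infinitely many non-wMRH numbers.

   Suppose p = X * X^R with X = A + s_b(p).  Then X divides p, so X = 1 or
   X = p.  If X = 1 then X * X^R = 1 < p.  If X = p then X^R = 1; but the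
   last base-b digit of p is nonzero (b does not divide p) and p has at
   least two digits (p >= b), so that digit becomes a leading digit of p^R
   in a position of weight at least b, whence p^R >= b > 1. *)

Lemma from_digits_cat (b : nat) (s t : seq nat) :
  from_digits b (s ++ t) = from_digits b s + b ^ size s * from_digits b t.
Proof.
elim: s => [|x s IH] /=; first by rewrite mul1n.
by rewrite IH expnS mulnDr mulnA addnA.
Qed.

Lemma digits_two (b n : nat) :
  2 <= b -> b <= n ->
  exists s, digits b n = [:: n %% b, n %/ b %% b & s].
Proof.
move=> hb hbn; rewrite /digits.
have [k hk] : exists k, n = k.+2 by exists (n - 2); lia.
have q0 : (n %/ b == 0) = false by apply/negbTE; rewrite -lt0n divn_gt0; lia.
have n0 : (n == 0) = false by apply/negbTE; lia.
by exists (digits_aux b k (n %/ b %/ b)); rewrite {1}hk /= n0 q0.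
Qed.

Lemma reversal1 (b : nat) : 2 <= b -> reversal b 1 = 1.
Proof. by move=> hb; rewrite /reversal /digits /= modn_small // muln0. Qed.

(* If n has at least two digits and its last digit is nonzero, that digit
   lands in a position of weight >= b in the reversal. *)
Lemma reversal_ge_base (b n : nat) :
  2 <= b -> b <= n -> ~~ (b %| n) -> b <= reversal b n.
Proof.
move=> hb hbn hndvd.
have [s hs] := digits_two b n hb hbn.
have last_pos : 0 < n %% b by rewrite lt0n.
rewrite /reversal hs rev_cons -cats1 from_digits_cat /=.
have : b ^ 1 <= b ^ size (rev (n %/ b %% b :: s)) by rewrite leq_exp2l // size_rev.
rewrite expn1; nia.
Qed.

Lemma prime_not_wMRH (b p : nat) : 2 <= b -> prime p -> b < p -> ~ wMRH b p.
Proof.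
move=> hb pp hbp [_ [A]].
set X := A + digit_sum b p => hpX.
have hX : X %| p by rewrite {1}hpX dvdn_mulr.
have hndvd : ~~ (b %| p).
  apply/negP => /(prime_nt_dvdP pp); lia.
case/orP: ((primeP pp).2 X hX) => /eqP hXval.
- by move: hpX; rewrite hXval reversal1 //; lia.
- move: hpX; rewrite hXval => hpp.
  have hR : reversal b p = 1.
    by apply/eqP; rewrite -(eqn_pmul2l (prime_gt0 pp)) muln1 -hpp.
  have := reversal_ge_base b p hb (ltnW hbp) hndvd; lia.
Qed.

Theorem proposition16 (b : nat) (hb : 2 <= b) :
  forall m : nat, exists N : nat, m < N /\ ~ wMRH b N.
Proof.
move=> m.
have [p hp pp] := prime_above (m + b).
exists p; split; first lia.
by apply: prime_not_wMRH => //; lia.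
Qed.
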